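(* Let $A\in\mathbb{R}^{m\times m}$ be positive definite, $B\in\mathbb{R}^{m\times n}$ ($n\le m$), $\alpha\ge0$, $\beta>0$, and let $(\lambda,(u^*,v^* )^* )$ be an eigenpair of $\mathcal{P}_{MGSSP}^{-1}\mathcal{A}$ with $u\in\mathbb{C}^m$, $v\in\mathbb{C}^n$ and $B^Tu\neq0$. Set $a_1+ib_1=\frac{u^*Au}{u^*u}$ ($a_1,b_1\in\mathbb{R}$), $c_1=\frac{u^*BB^Tu}{u^*u}$, $a_2=\beta^2(a_1^2-b_1^2)-4\alpha\beta c_1$, $b_2=2\beta^2a_1b_1$, and $$z_1=\sqrt{\tfrac{\sqrt{a_2^2+b_2^2}+a_2}{2}},\qquad z_2=\operatorname{sign}(b_1)\sqrt{\tfrac{\sqrt{a_2^2+b_2^2}-a_2}{2}},$$ so that $(z_1+iz_2)^2=a_2+ib_2$. Let $D=\alpha\beta+2\beta a_1+4c_1+2i\beta b_1$. Then $\lambda$ is one of $$\lambda_+=\frac12+\frac{(z_1-\alpha\beta-\beta a_1)+i(z_2-\beta b_1)}{2D},\qquad \lambda_-=\frac12-\frac{(z_1+\alpha\beta+\beta a_1)+i(z_2+\beta b_1)}{2D},$$ and $$\Big|\lambda_\pm-\frac12\Big|^2\le\frac{(\alpha\beta+2\beta a_1)^2+\big(\beta|b_1|+\sqrt{\beta^2b_1^2+4\alpha\beta c_1}\big)^2}{4\big[(\alpha\beta+2\beta a_1+4c_1)^2+4\beta^2b_1^2\big]}\le\frac{(\alpha\beta+2\beta\rho(H))^2+\big(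\beta\rho(S)+\sqrt{\beta^2\rho(S)^2+4\alpha\beta\rho(BB^T)}\big)^2}{4\big(\alpha\beta+2\beta\lambda_{\min}(H)+4\lambda_{\min}(BB^T)\big)^2}.$$
   Context: A real square matrix $A$ is called positive definite if $x^TAx>0$ for all nonzero $x\in\mathbb{R}^m$ ($A$ need not be symmetric). $H=\frac12(A+A^T)$, $S=\frac12(A-A^T)$. $\mathcal{A}=\begin{pmatrix}A & B\\ -B^T & 0\end{pmatrix}$ and, for $\alpha\ge0,\beta>0$, $\mathcal{P}_{MGSSP}=\begin{pmatrix}\alpha I+2A & 2B\\ -2B^T & \beta I\end{pmatrix}$. $\lambda_{\min}(\cdot)$ is the smallest eigenvalue of a symmetric matrix, $\rho(\cdot)$ the spectral radius, $\operatorname{sign}(b_1)$ the sign of $b_1$ (with $\operatorname{sign}(0)$ taken as $\pm1$ arbitrarily; both choices give $z_2=0$ unless $b_1\neq0$). *)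

(* Complex numbers: an arbitrary numClosedFieldType C
   (e.g. algC, or the field of complex numbers); real matrices are matrices
   over C whose entries are real (Num.real). *)
From HB Require Import structures.
From mathcomp Require Import all_boot all_order all_algebra.
Set Implicit Arguments. Unset Strict Implicit. Unset Printing Implicit Defensive.
Import Order.TTheory GRing.Theory Num.Theory.
Local Open Scope ring_scope.

Definition ctrmx (C : numClosedFieldType) (p q : nat) (M : 'M[C]_(p, q)) : 'M[C]_(q, p) :=
  (map_mx (fun x => x^*) M)^T.

(* A real square matrix is positive definite if x^T A x > 0 for all nonzero
   real x (A need not be symmetric). *)
Definition posdef (C : numClosedFieldType) (m : nat) (A : 'M[C]_m) : Prop :=
  A \is a mxOver Num.real /\
  forall x : 'cV[C]_m, x \is a mxOver Num.real -> x != 0 -> 0 < (x^T *m A *m x) 0 0.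

Definition is_spectral_radius (C : numClosedFieldType) (m : nat) (M : 'M[C]_m) (r : C) : Prop :=
  (exists2 l, eigenvalue M l & `|l| = r) /\ (forall l, eigenvalue M l -> `|l| <= r).

Definition is_lambda_min (C : numClosedFieldType) (m : nat) (M : 'M[C]_m) (l : C) : Prop :=
  eigenvalue M l /\ (forall k, eigenvalue M k -> l <= k).

Definition saddleA (C : numClosedFieldType) (m n : nat) (A : 'M[C]_m) (B : 'M[C]_(m, n))
  : 'M[C]_(m + n) := block_mx A B (- B^T) 0.

Definition P_MGSSP (C : numClosedFieldType) (m n : nat) (A : 'M[C]_m) (B : 'M[C]_(m, n))
  (alpha beta : C) : 'M[C]_(m + n) :=
  block_mx (alpha%:M + 2%:R *: A) (2%:R *: B) (- (2%:R *: B^T)) (beta%:M).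

From HB Require Import structures.
From mathcomp Require Import all_boot all_order all_algebra.
From mathcomp Require Import spectral sesquilinear.
From mathcomp Require Import ring.
Import Order.TTheory GRing.Theory Num.Theory.
Set Implicit Arguments.
Unset Strict Implicit.
Unset Printing Implicit Defensive.

Local Open Scope ring_scope.

(* Multiplying the two block rows of [A w = lam P w] by u^* and u^* B and
   eliminating u^* B v gives a quadratic equation for lam whose coefficients are
   the Rayleigh quotients q = u^* A u / u^* u and c1 = u^* B B^T u / u^* u.
   Completing the square, D (2 lam - 1) + alpha beta + beta q is a square root
   of beta^2 q^2 - 4 alpha beta c1 = a2 + i b2, i.e. +-(z1 + i z2), which gives
   the two formulas. Since |a2 + i b2| <= beta^2 |q|^2 + 4 alpha beta c1, we get
   0 <= z1 <= beta a1 and |z2| <= sqrt (beta^2 b1^2 + 4 alpha beta c1), whence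
   the bound on |lam - 1/2|^2. The last bound follows from
   lambda_min <= Rayleigh quotient <= spectral radius for the normal matrices
   H, S and B B^T, positive definiteness of A giving lambda_min(H) > 0. *)

Section ConjugateTranspose.
Context {C : numClosedFieldType}.
Implicit Types (p q r : nat).

Lemma ctrmxE p q (X : 'M[C]_(p, q)) : ctrmx X = (X ^t* )%sesqui.
Proof. by rewrite /ctrmx map_trmx. Qed.

Lemma ctrmxK p q (X : 'M[C]_(p, q)) : ctrmx (ctrmx X) = X.
Proof. by apply/matrixP=> i j; rewrite !mxE conjCK. Qed.

Lemma ctrmx_mul p q r (X : 'M[C]_(p, q)) (Y : 'M[C]_(q, r)) :
  ctrmx (X *m Y) = ctrmx Y *m ctrmx X.
Proof. by rewrite /ctrmx map_mxM trmx_mul. Qed.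

Lemma ctrmxD p q (X Y : 'M[C]_(p, q)) : ctrmx (X + Y) = ctrmx X + ctrmx Y.
Proof. by apply/matrixP=> i j; rewrite !mxE rmorphD. Qed.

Lemma ctrmxN p q (X : 'M[C]_(p, q)) : ctrmx (- X) = - ctrmx X.
Proof. by apply/matrixP=> i j; rewrite !mxE rmorphN. Qed.

Lemma ctrmxZ p q (a : C) (X : 'M[C]_(p, q)) : ctrmx (a *: X) = a^* *: ctrmx X.
Proof. by apply/matrixP=> i j; rewrite !mxE rmorphM. Qed.

Lemma ctrmx_real p q (X : 'M[C]_(p, q)) : X \is a mxOver Num.real -> ctrmx X = X^T.
Proof. by move=> hX; rewrite /ctrmx realmxC. Qed.

Lemma trmx_real p q (X : 'M[C]_(p, q)) :
  X \is a mxOver Num.real -> X^T \is a mxOver Num.real.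
Proof. by move=> hX; apply/mxOverP => i j; rewrite mxE (mxOverP hX). Qed.

Lemma mx11D (X Y : 'M[C]_1) : (X + Y) 0 0 = X 0 0 + Y 0 0.
Proof. by rewrite mxE. Qed.

Lemma mx11N (X : 'M[C]_1) : (- X) 0 0 = - X 0 0.
Proof. by rewrite mxE. Qed.

Lemma mx11Z (a : C) (X : 'M[C]_1) : (a *: X) 0 0 = a * X 0 0.
Proof. by rewrite mxE. Qed.

Lemma ctrmx11 (X : 'M[C]_1) : ctrmx X 0 0 = (X 0 0)^*.
Proof. by rewrite !mxE. Qed.

Lemma ctrmx_mul_self_gt0 p (x : 'cV[C]_p) : x != 0 -> 0 < (ctrmx x *m x) 0 0.
Proof.
move=> x_neq0; have -> : (ctrmx x *m x) 0 0 = \sum_i `|x i 0| ^+ 2.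
  by rewrite mxE; apply: eq_bigr => i _; rewrite !mxE normCK mulrC.
have [j xj_neq0] : exists j, x j 0 != 0.
  apply/existsP; apply: contraNT x_neq0; rewrite negb_exists => /forallP x0.
  by apply/eqP/matrixP => i k; rewrite ord1 mxE; apply/eqP; rewrite -[_ == _]negbK.
rewrite (bigD1 j) //= ltr_pwDl ?exprn_gt0 ?normr_gt0 //.
by rewrite sumr_ge0 // => i _; rewrite exprn_ge0.
Qed.

Lemma ctrmx_mul_self_ge0 p (x : 'cV[C]_p) : 0 <= (ctrmx x *m x) 0 0.
Proof.
have [->|x_neq0] := eqVneq x 0; first by rewrite mulmx0 mxE.
exact/ltW/ctrmx_mul_self_gt0.
Qed.

Lemma normalmx_ctrmx_sign p (M : 'M[C]_p) k :
  ctrmx M = (-1) ^+ k *: M -> M \is normalmx.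
Proof. by move=> hM; apply/normalmxP; rewrite -ctrmxE hM -scalemxAl -scalemxAr. Qed.

End ConjugateTranspose.

Section RealQuadraticForm.
Context {C : numClosedFieldType} {p : nat}.
Implicit Types (M : 'M[C]_p) (u : 'cV[C]_p).

Lemma conjC_quad_real M u : M \is a mxOver Num.real ->
  ((ctrmx u *m M *m u) 0 0)^* = (ctrmx u *m M^T *m u) 0 0.
Proof.
by move=> hM; rewrite -ctrmx11 !ctrmx_mul ctrmxK (ctrmx_real hM) mulmxA.
Qed.

Lemma Re_quad_real M u : M \is a mxOver Num.real ->
  'Re ((ctrmx u *m M *m u) 0 0) = (ctrmx u *m (2%:R^-1 *: (M + M^T)) *m u) 0 0.
Proof.
move=> hM; rewrite -scalemxAr -scalemxAl mulmxDr mulmxDl mx11Z mx11D.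
by rewrite -conjC_quad_real // ReE mulrC.
Qed.

Lemma Im_quad_real M u : M \is a mxOver Num.real ->
  'i * 'Im ((ctrmx u *m M *m u) 0 0) = (ctrmx u *m (2%:R^-1 *: (M - M^T)) *m u) 0 0.
Proof.
move=> hM; rewrite -scalemxAr -scalemxAl mulmxBr mulmxBl mx11Z mx11D mx11N.
by rewrite -conjC_quad_real // ImE !mulrA -expr2 sqrCi; ring.
Qed.

Lemma Re_quad_posdef_gt0 M u : posdef M -> u != 0 -> 0 < 'Re ((ctrmx u *m M *m u) 0 0).
Proof.
move=> [hMr hM] u_neq0.
pose x := map_mx (@Re C) u; pose y := map_mx (@Im C) u.
have xr : x \is a mxOver Num.real by apply/mxOverP => i j; rewrite mxE Creal_Re.
have yr : y \is a mxOver Num.real by apply/mxOverP => i j; rewrite mxE Creal_Im.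
have uE : u = x + 'i *: y by apply/matrixP => i j; rewrite !mxE -Crect.
pose f (X Y : 'cV[C]_p) := (X^T *m M *m Y) 0 0.
have f_real X Y : X \is a mxOver Num.real -> Y \is a mxOver Num.real -> f X Y \is Num.real.
  by move=> hX hY; apply: (mxOverP (mxOverM (mxOverM (trmx_real hX) hMr) hY)).
have f_ge0 X : X \is a mxOver Num.real -> 0 <= f X X.
  move=> hX; have [->|X_neq0] := eqVneq X 0; first by rewrite /f mulmx0 mxE.
  exact/ltW/hM.
have -> : (ctrmx u *m M *m u) 0 0 = (f x x + f y y) + 'i * (f x y - f y x).
  rewrite uE ctrmxD ctrmxZ conjCi !ctrmx_real //.
  rewrite !(mulmxDl, mulmxDr) -!scalemxAl -!scalemxAr !(mx11D, mx11Z).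
  rewrite -/(f x x) -/(f x y) -/(f y x) -/(f y y).
  have ii : 'i * 'i = -1 :> C by rewrite -expr2 sqrCi.
  rewrite [- 'i * ('i * _)]mulrA !mulNr ii; ring.
rewrite Re_rect ?(rpredD, rpredN, f_real) //.
have [x0|x_neq0] := eqVneq x 0.
  have y_neq0 : y != 0 by apply: contraNneq u_neq0 => y0; rewrite uE x0 y0 scaler0 addr0.
  by rewrite ltr_wpDl ?f_ge0 // hM.
by rewrite ltr_wpDr ?f_ge0 // hM.
Qed.

End RealQuadraticForm.

Section Rayleigh.
Context {C : numClosedFieldType} {p : nat}.
Implicit Types (M : 'M[C]_p) (u : 'cV[C]_p).

Lemma normalmx_rayleigh M u : M \is normalmx ->
  exists (w : 'cV[C]_p) (d : 'rV[C]_p),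
   [/\ (ctrmx u *m M *m u) 0 0 = \sum_i `|w i 0| ^+ 2 * d 0 i,
       (ctrmx u *m u) 0 0 = \sum_i `|w i 0| ^+ 2 &
       forall i, eigenvalue M (d 0 i)].
Proof.
move=> M_normal; pose P := spectralmx M; pose d := spectral_diag M.
have P_unit : P \in unitmx := spectral_unit M.
have ME : M = invmx P *m diag_mx d *m P by apply/orthomx_spectralP.
have PV : invmx P = ctrmx P by rewrite invmx_unitary ?ctrmxE // spectral_unitarymx.
exists (P *m u), d; split.
- rewrite ME PV -!mulmxA mulmxA -ctrmx_mul mulmxA mxE.
  by apply: eq_bigr => j _; rewrite mul_mx_diag !mxE normCK; ring.
- rewrite -[ctrmx u]mulmx1 -(mulVmx P_unit) PV mulmxA -ctrmx_mul -mulmxA mxE.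
  by apply: eq_bigr => j _; rewrite !mxE normCK mulrC.
- move=> i; apply/eigenvalueP; exists ('e_i *m P).
    by rewrite [in X in _ *m X]ME !mulmxA mulmxK // -[_ *m diag_mx d]rowE row_diag_mx scalemxAl.
  rewrite -(mul0mx _ P) (inj_eq (can_inj (mulmxK P_unit))).
  by apply/eqP => /matrixP /(_ 0 i) /eqP; rewrite !mxE !eqxx oner_eq0.
Qed.

Lemma rayleigh_norm_le M u (r : C) : M \is normalmx ->
  (forall l, eigenvalue M l -> `|l| <= r) ->
  `|(ctrmx u *m M *m u) 0 0| <= r * (ctrmx u *m u) 0 0.
Proof.
move=> /(normalmx_rayleigh u) [w [d [-> -> eig_d]]] hr.
rewrite mulr_sumr; apply: le_trans (ler_norm_sum _ _ _) _; apply: ler_sum => i _.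
rewrite normrM ger0_norm ?exprn_ge0 // [r * _]mulrC.
by apply: ler_wpM2l; rewrite ?exprn_ge0 ?hr.
Qed.

Lemma lambda_min_le_rayleigh M u (l : C) : M \is normalmx ->
  (forall k, eigenvalue M k -> l <= k) ->
  l * (ctrmx u *m u) 0 0 <= (ctrmx u *m M *m u) 0 0.
Proof.
move=> /(normalmx_rayleigh u) [w [d [-> -> eig_d]]] hl.
rewrite mulr_sumr; apply: ler_sum => i _; rewrite mulrC.
by apply: ler_wpM2l; rewrite ?exprn_ge0 ?hl.
Qed.

Lemma rayleigh_quotient_bounds M u (l r : C) : M \is normalmx -> u != 0 ->
  (forall k, eigenvalue M k -> l <= k) -> (forall k, eigenvalue M k -> `|k| <= r) ->
  (ctrmx u *m M *m u) 0 0 \is Num.real ->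
  l <= (ctrmx u *m M *m u) 0 0 / (ctrmx u *m u) 0 0 <= r.
Proof.
move=> M_normal u_neq0 hl hr x_real; have uu_gt0 := ctrmx_mul_self_gt0 u_neq0.
rewrite ler_pdivlMr // ler_pdivrMr // lambda_min_le_rayleigh //=.
exact: le_trans (real_ler_norm x_real) (rayleigh_norm_le u M_normal hr).
Qed.

Lemma eigenvalue_rayleigh M (l : C) : eigenvalue M l ->
  exists2 c : 'cV[C]_p, c != 0 & (ctrmx c *m M *m c) 0 0 = l * (ctrmx c *m c) 0 0.
Proof.
move=> /eigenvalueP [e he e_neq0]; exists (ctrmx e).
  by apply: contraNneq e_neq0 => e0; rewrite -(ctrmxK e) e0 /ctrmx map_mx0 trmx0.
by rewrite ctrmxK he -scalemxAl mxE.
Qed.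

End Rayleigh.

Lemma quad_gram_real (C : numClosedFieldType) p q (B : 'M[C]_(p, q)) (u : 'cV[C]_p) :
  B \is a mxOver Num.real ->
  (ctrmx u *m B *m B^T *m u) 0 0 = (ctrmx (B^T *m u) *m (B^T *m u)) 0 0.
Proof. by move=> hB; rewrite ctrmx_mul (ctrmx_real (trmx_real hB)) trmxK !mulmxA. Qed.

Lemma unitmx_ker0 (F : fieldType) n (M : 'M[F]_n) :
  (forall x : 'cV_n, M *m x = 0 -> x = 0) -> M \in unitmx.
Proof.
move=> M_inj; rewrite unitmxE unitfE -det_tr; apply/negP => /det0P [w w_neq0].
move=> /(congr1 trmx); rewrite trmx_mul trmxK trmx0 => /M_inj /eqP.
by rewrite trmx_eq0 (negPf w_neq0).
Qed.

Section SaddlePoint.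
Context {C : numClosedFieldType} {m n : nat}.
Variables (A : 'M[C]_m) (B : 'M[C]_(m, n)) (alpha beta : C).

Lemma saddle_pencil_quad (u : 'cV[C]_m) (v : 'cV[C]_n) (lam mu : C) :
  mu *: (saddleA A B *m col_mx u v) = lam *: (P_MGSSP A B alpha beta *m col_mx u v) ->
  let uu := (ctrmx u *m u) 0 0 in
  let qA := (ctrmx u *m A *m u) 0 0 in
  let cc := (ctrmx u *m B *m B^T *m u) 0 0 in
  beta * lam ^+ 2 * (alpha * uu + 2%:R * qA) - beta * lam * mu * qA
    + (2%:R * lam - mu) ^+ 2 * cc = 0.
Proof.
move=> E uu qA cc; move: E.
rewrite /saddleA /P_MGSSP !mul_block_col !scale_col_mx => /eq_col_mx [E1 E2].
have {E1} /= e1 := congr1 (fun X => (ctrmx u *m X) 0 0) E1.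
have {E2} /= e2 := congr1 (fun X => (ctrmx u *m B *m X) 0 0) E2.
rewrite -?scalemxAr ?mx11Z in e1 e2.
rewrite ?(mulmxDl, mulmxDr, mulNmx, mulmxN, mul_scalar_mx, mul0mx, mulmx0, addr0) in e1 e2.
rewrite -?scalemxAl -?scalemxAr ?mulmxA ?(mx11D, mx11N, mx11Z) -/uu -/qA -/cc in e1 e2.
move: e1 e2; set s := (ctrmx u *m B *m v) 0 0 => e1 e2.
(* eliminate s between the two equations *)
transitivity (- (beta * lam) * (mu * (qA + s) - lam * (alpha * uu + 2%:R * qA + 2%:R * s))
  + (2%:R * lam - mu) * (mu * - cc - lam * (- (2%:R * cc) + beta * s))); first ring.
by rewrite e1 e2 !subrr; ring.
Qed.

Lemma P_MGSSP_unit : posdef A -> B \is a mxOver Num.real -> 0 <= alpha -> 0 < beta ->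
  P_MGSSP A B alpha beta \in unitmx.
Proof.
move=> hA hB ha hb; apply: unitmx_ker0 => x Px0.
rewrite -[x]vsubmxK in Px0 *; move: (usubmx x) (dsubmx x) Px0 => u v Px0.
(* At (lam, mu) = (1, 0) the pencil identity reads
   beta (alpha u^*u + 2 u^*Au) + 4 |B^T u|^2 = 0, whose real part is positive
   unless u = 0. *)
have u0 : u = 0.
  have := saddle_pencil_quad (u := u) (v := v) (lam := 1) (mu := 0).
  rewrite scale0r scale1r Px0 => /(_ erefl) /=; rewrite quad_gram_real //.
  set uu := (ctrmx u *m u) 0 0; set qA := (ctrmx u *m A *m u) 0 0.
  set g := (ctrmx _ *m _) 0 0.
  rewrite (_ : _ - _ + _ = beta * (alpha * uu + 2%:R * qA) + 4%:R * g); last by ring.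
  apply: contra_eq => u_neq0; apply/negP => /eqP /(congr1 (@Re C)).
  have uu_real : uu \is Num.real := ger0_real (ctrmx_mul_self_ge0 u).
  have g_real : g \is Num.real := ger0_real (ctrmx_mul_self_ge0 _).
  rewrite raddf0 !raddfD /= !ReMl ?rpred_nat ?gtr0_real //.
  rewrite raddfD /= !ReMl ?rpred_nat ?ger0_real //.
  rewrite (Creal_ReP _ uu_real) (Creal_ReP _ g_real); apply/eqP; rewrite gt_eqF //.
  rewrite ltr_wpDr ?mulr_ge0 ?ler0n ?ctrmx_mul_self_ge0 // pmulr_rgt0 //.
  by rewrite ltr_wpDl ?mulr_ge0 ?ctrmx_mul_self_ge0 // mulr_gt0 ?ltr0n ?Re_quad_posdef_gt0.
move: Px0; rewrite u0 /P_MGSSP mul_block_col !mulmx0 !add0r mul_scalar_mx -col_mx0.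
by case/eq_col_mx=> _ /eqP; rewrite scaler_eq0 gt_eqF // => /eqP ->; rewrite col_mx0.
Qed.

Lemma eigen_quadratic (u : 'cV[C]_m) (v : 'cV[C]_n) (lam : C) :
  posdef A -> B \is a mxOver Num.real -> 0 <= alpha -> 0 < beta -> u != 0 ->
  invmx (P_MGSSP A B alpha beta) *m saddleA A B *m col_mx u v = lam *: col_mx u v ->
  let q := (ctrmx u *m A *m u) 0 0 / (ctrmx u *m u) 0 0 in
  let c := (ctrmx u *m B *m B^T *m u) 0 0 / (ctrmx u *m u) 0 0 in
  beta * lam ^+ 2 * (alpha + 2%:R * q) - beta * lam * q + (2%:R * lam - 1) ^+ 2 * c = 0.
Proof.
move=> hA hB ha hb u_neq0 heig q c.
have uu_neq0 : (ctrmx u *m u) 0 0 != 0 by rewrite gt_eqF ?ctrmx_mul_self_gt0.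
have := saddle_pencil_quad (u := u) (v := v) (lam := lam) (mu := 1).
rewrite scale1r scalemxAr -heig -mulmxA mulKVmx ?P_MGSSP_unit // => /(_ erefl) /= pencil0.
by rewrite -(mul0r ((ctrmx u *m u) 0 0)^-1) -pencil0 /q /c; field.
Qed.

End SaddlePoint.

Section SymSkewGram.
Context {C : numClosedFieldType} {m n : nat}.
Variables (A : 'M[C]_m) (B : 'M[C]_(m, n)).
Hypotheses (hA : posdef A) (hB : B \is a mxOver Num.real).

Let hAr : A \is a mxOver Num.real. Proof. by case: hA. Qed.

Let half_real : (2%:R^-1 : C) \is Num.real.
Proof. by rewrite rpredV rpred_nat. Qed.

Lemma normalmx_sym_part : 2%:R^-1 *: (A + A^T) \is normalmx.
Proof.
apply: (@normalmx_ctrmx_sign _ _ _ 0).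
rewrite ctrmxZ ctrmxD (ctrmx_real hAr) (ctrmx_real (trmx_real hAr)) trmxK.
by rewrite (CrealP half_real) addrC scale1r.
Qed.

Lemma normalmx_skew_part : 2%:R^-1 *: (A - A^T) \is normalmx.
Proof.
apply: (@normalmx_ctrmx_sign _ _ _ 1).
rewrite ctrmxZ ctrmxD ctrmxN (ctrmx_real hAr) (ctrmx_real (trmx_real hAr)) trmxK.
by rewrite (CrealP half_real) scaleN1r -scalerN opprB addrC.
Qed.

Lemma normalmx_gram : B *m B^T \is normalmx.
Proof.
apply: (@normalmx_ctrmx_sign _ _ _ 0).
by rewrite ctrmx_mul (ctrmx_real hB) (ctrmx_real (trmx_real hB)) trmxK scale1r.
Qed.

Lemma eigenvalue_sym_part_gt0 l : eigenvalue (2%:R^-1 *: (A + A^T)) l -> 0 < l.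
Proof.
move=> /eigenvalue_rayleigh [c c_neq0 hc].
have := Re_quad_posdef_gt0 hA c_neq0.
by rewrite Re_quad_real // hc pmulr_lgt0 // ctrmx_mul_self_gt0.
Qed.

Lemma eigenvalue_gram_ge0 l : eigenvalue (B *m B^T) l -> 0 <= l.
Proof.
move=> /eigenvalue_rayleigh [c c_neq0 hc].
have := ctrmx_mul_self_ge0 (B^T *m c).
by rewrite -quad_gram_real // -(mulmxA _ B) hc pmulr_lge0 // ctrmx_mul_self_gt0.
Qed.

Variable u : 'cV[C]_m.
Hypothesis u_neq0 : u != 0.

Let uu_gt0 : 0 < (ctrmx u *m u) 0 0 := ctrmx_mul_self_gt0 u_neq0.
Let uuV_real : ((ctrmx u *m u) 0 0)^-1 \is Num.real.
Proof. by rewrite rpredV gtr0_real. Qed.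

Lemma rayleigh_Re_bounds lH rH :
  is_lambda_min (2%:R^-1 *: (A + A^T)) lH -> is_spectral_radius (2%:R^-1 *: (A + A^T)) rH ->
  lH <= 'Re ((ctrmx u *m A *m u) 0 0 / (ctrmx u *m u) 0 0) <= rH.
Proof.
move=> [_ hl] [_ hr]; rewrite ReMr // Re_quad_real //.
by apply: rayleigh_quotient_bounds; rewrite ?normalmx_sym_part // -Re_quad_real ?Creal_Re.
Qed.

Lemma rayleigh_Im_bound rS : is_spectral_radius (2%:R^-1 *: (A - A^T)) rS ->
  `|'Im ((ctrmx u *m A *m u) 0 0 / (ctrmx u *m u) 0 0)| <= rS.
Proof.
move=> [_ hr]; rewrite ImMr // normrM [`|_^-1|]gtr0_norm ?invr_gt0 // ler_pdivrMr //.
rewrite -[`|'Im _|]mul1r -normCi -normrM Im_quad_real //.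
exact: rayleigh_norm_le normalmx_skew_part hr.
Qed.

Lemma rayleigh_gram_bounds lBB rBB :
  is_lambda_min (B *m B^T) lBB -> is_spectral_radius (B *m B^T) rBB ->
  lBB <= (ctrmx u *m B *m B^T *m u) 0 0 / (ctrmx u *m u) 0 0 <= rBB.
Proof.
move=> [_ hl] [_ hr]; rewrite -(mulmxA _ B).
apply: rayleigh_quotient_bounds; rewrite ?normalmx_gram //.
by rewrite mulmxA quad_gram_real // ger0_real ?ctrmx_mul_self_ge0.
Qed.

End SymSkewGram.

Section ComplexSqrt.
Context {C : numClosedFieldType}.

Lemma real_sqrtC_sqr (x : C) : x \is Num.real -> sqrtC (x ^+ 2) = `|x|.
Proof. by move=> hx; rewrite -real_normK // sqrCK. Qed.

Lemma real_sqr_ge0 (x : C) : x \is Num.real -> 0 <= x ^+ 2.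
Proof. by move=> hx; rewrite -real_normK // exprn_ge0. Qed.

Lemma real_sqr_le (x y : C) : x \is Num.real -> `|x| <= y -> x ^+ 2 <= y ^+ 2.
Proof.
move=> hx hxy; rewrite -real_normK //; apply: lerXn2r; rewrite ?nnegrE //.
exact: le_trans (normr_ge0 _) hxy.
Qed.

Lemma real_norm_le_sqrtC_sqrD (a b : C) : a \is Num.real -> b \is Num.real ->
  `|a| <= sqrtC (a ^+ 2 + b ^+ 2).
Proof.
move=> ha hb; rewrite -real_sqrtC_sqr // ler_sqrtC ?nnegrE ?real_sqr_ge0 //.
  by rewrite lerDl real_sqr_ge0.
by rewrite addr_ge0 ?real_sqr_ge0.
Qed.

Lemma sqrtC_sqrD_addr_ge0 (a b : C) : a \is Num.real -> b \is Num.real ->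
  0 <= sqrtC (a ^+ 2 + b ^+ 2) + a.
Proof.
move=> ha hb; have /(real_ler_normlP ha) [h _] := real_norm_le_sqrtC_sqrD ha hb.
by rewrite -lerBlDr sub0r.
Qed.

Lemma sqrtC_sqrD_subr_ge0 (a b : C) : a \is Num.real -> b \is Num.real ->
  0 <= sqrtC (a ^+ 2 + b ^+ 2) - a.
Proof.
move=> ha hb; have /(real_ler_normlP ha) [_ h] := real_norm_le_sqrtC_sqrD ha hb.
by rewrite subr_ge0.
Qed.

Lemma sqrtC_rect (a b sgn : C) : a \is Num.real -> b \is Num.real ->
  sgn ^+ 2 = 1 -> sgn * `|b| = b ->
  let s := sqrtC (a ^+ 2 + b ^+ 2) in
  (sqrtC ((s + a) / 2%:R) + 'i * (sgn * sqrtC ((s - a) / 2%:R))) ^+ 2 = a + 'i * b.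
Proof.
move=> ha hb sgn2 sgn_b s.
have s2 : s ^+ 2 = a ^+ 2 + b ^+ 2 by rewrite sqrtCK.
have sa_ge0 : 0 <= (s + a) / 2%:R by rewrite divr_ge0 ?ler0n ?sqrtC_sqrD_addr_ge0.
have sa'_ge0 : 0 <= (s - a) / 2%:R by rewrite divr_ge0 ?ler0n ?sqrtC_sqrD_subr_ge0.
(* the two square roots multiply to sqrtC ((b / 2)^2) = |b| / 2 *)
have prod : 2%:R * (sqrtC ((s + a) / 2%:R) * (sgn * sqrtC ((s - a) / 2%:R))) = b.
  rewrite [sqrtC _ * _]mulrCA -sqrtCM ?nnegrE //.
  have -> : (s + a) / 2%:R * ((s - a) / 2%:R) = (b / 2%:R) ^+ 2.
    by transitivity ((s ^+ 2 - a ^+ 2) / 4%:R); [field | rewrite s2; field].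
  rewrite real_sqrtC_sqr ?rpredM ?rpredV ?rpred_nat // normf_div normr_nat.
  by rewrite -[in RHS]sgn_b; field.
by rewrite sqrrD exprMn sqrCi exprMn sgn2 !sqrtCK -prod; field.
Qed.

End ComplexSqrt.

Lemma norm_rect_div_le {C : numClosedFieldType} (x y p r u w : C) :
  [/\ x \is Num.real, y \is Num.real, u \is Num.real & w \is Num.real] ->
  `|x| <= p -> `|y| <= r ->
  `|(x + 'i * y) / (2%:R * (u + 'i * w))| ^+ 2 <= (p ^+ 2 + r ^+ 2) / (4%:R * (u ^+ 2 + w ^+ 2)).
Proof.
move=> [xr yr ur wr] hx hy.
rewrite normf_div expr_div_n normrM normr_nat exprMn !normC2_rect // -natrX.
apply: ler_wpM2r; first by rewrite invr_ge0 mulr_ge0 ?ler0n ?addr_ge0 ?real_sqr_ge0.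
by rewrite lerD ?real_sqr_le.
Qed.

Section EigenvalueFormula.
Context {C : numClosedFieldType}.
Variables (alpha beta a1 b1 c1 sgn : C).
Hypotheses (ha : 0 <= alpha) (hb : 0 < beta) (ha1 : 0 < a1) (hb1 : b1 \is Num.real)
  (hc1 : 0 <= c1).
Hypotheses (hsgn : sgn = 1 \/ sgn = -1) (hsgnb : b1 != 0 -> sgn = Num.sg b1).

Local Notation q := (a1 + 'i * b1).
Local Notation a2 := (beta ^+ 2 * (a1 ^+ 2 - b1 ^+ 2) - 4%:R * alpha * beta * c1).
Local Notation b2 := (2%:R * beta ^+ 2 * a1 * b1).
Local Notation s := (sqrtC (a2 ^+ 2 + b2 ^+ 2)).
Local Notation z1 := (sqrtC ((s + a2) / 2%:R)).
Local Notation z2 := (sgn * sqrtC ((s - a2) / 2%:R)).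
Local Notation D := (alpha * beta + 2%:R * beta * a1 + 4%:R * c1 + 2%:R * 'i * beta * b1).
Local Notation T := (beta ^+ 2 * (a1 ^+ 2 + b1 ^+ 2) + 4%:R * alpha * beta * c1).

Let beta_ge0 : 0 <= beta := ltW hb.
Let a1_ge0 : 0 <= a1 := ltW ha1.
Let alphar : alpha \is Num.real := ger0_real ha.
Let betar : beta \is Num.real := gtr0_real hb.
Let a1r : a1 \is Num.real := gtr0_real ha1.
Let c1r : c1 \is Num.real := ger0_real hc1.
Let a2r : a2 \is Num.real.
Proof. by rewrite !(rpredB, rpredM, rpredX, rpred_nat). Qed.
Let b2r : b2 \is Num.real.
Proof. by rewrite !(rpredM, rpredX, rpred_nat). Qed.
Let abc_ge0 : 0 <= 4%:R * alpha * beta * c1.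
Proof. by rewrite !mulr_ge0 ?ler0n. Qed.

(* s = |beta^2 q^2 - 4 alpha beta c1| <= T by the triangle inequality *)
Lemma discriminant_le : s <= T.
Proof.
have T_ge0 : 0 <= T by rewrite addr_ge0 // mulr_ge0 ?exprn_ge0 // addr_ge0 ?real_sqr_ge0.
rewrite -(sqrCK T_ge0) ler_sqrtC ?nnegrE ?exprn_ge0 //; last by rewrite addr_ge0 ?real_sqr_ge0.
rewrite -subr_ge0 (_ : _ - _ = 4%:R * (4%:R * alpha * beta * c1) * (beta ^+ 2 * a1 ^+ 2)).
  by rewrite !mulr_ge0 ?ler0n ?exprn_ge0.
by ring.
Qed.

Lemma root_re_le : z1 <= beta * a1.
Proof.
have ba_ge0 : 0 <= beta * a1 by rewrite mulr_ge0 ?ltW.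
rewrite -(sqrCK ba_ge0) ler_sqrtC ?nnegrE ?exprn_ge0 ?divr_ge0 ?ler0n ?sqrtC_sqrD_addr_ge0 //.
rewrite -subr_ge0 (_ : _ - _ = (T - s) / 2%:R); last by field.
by rewrite divr_ge0 ?ler0n // subr_ge0 discriminant_le.
Qed.

Lemma norm_root_im_le : `|z2| <= sqrtC (beta ^+ 2 * b1 ^+ 2 + 4%:R * alpha * beta * c1).
Proof.
have sgn_norm : `|sgn| = 1 by case: hsgn => ->; rewrite ?normrN normr1.
have sa_ge0 : 0 <= (s - a2) / 2%:R by rewrite divr_ge0 ?ler0n ?sqrtC_sqrD_subr_ge0.
have bc_ge0 : 0 <= beta ^+ 2 * b1 ^+ 2 + 4%:R * alpha * beta * c1.
  by rewrite addr_ge0 // mulr_ge0 ?real_sqr_ge0.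
rewrite normrM sgn_norm mul1r ger0_norm ?sqrtC_ge0 // ler_sqrtC ?nnegrE //.
rewrite -subr_ge0 (_ : _ - _ = (T - s) / 2%:R); last by field.
by rewrite divr_ge0 ?ler0n // subr_ge0 discriminant_le.
Qed.

Let sgn_sqr : sgn ^+ 2 = 1.
Proof. by case: hsgn => ->; rewrite ?sqrrN expr1n. Qed.

Let sgn_norm_b1 : sgn * `|b1| = b1.
Proof.
have [->|b1_neq0] := eqVneq b1 0; first by rewrite normr0 mulr0.
by rewrite hsgnb // -realEsg.
Qed.

Lemma root_sqr : (z1 + 'i * z2) ^+ 2 = a2 + 'i * b2.
Proof.
apply: sqrtC_rect => //.
rewrite normrM (@ger0_norm _ (_ * _)) ?mulr_ge0 ?exprn_ge0 ?ler0n //.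
by rewrite mulrCA sgn_norm_b1.
Qed.

Local Notation R := (alpha * beta + 2%:R * beta * a1 + 4%:R * c1).
Local Notation sq := (sqrtC (beta ^+ 2 * b1 ^+ 2 + 4%:R * alpha * beta * c1)).
Local Notation X := (((alpha * beta + 2%:R * beta * a1) ^+ 2 + (beta * `|b1| + sq) ^+ 2)
  / (4%:R * (R ^+ 2 + 4%:R * beta ^+ 2 * b1 ^+ 2))).

Let DE : D = R + 'i * (2%:R * beta * b1).
Proof. by ring. Qed.

Let R_gt0 : 0 < R.
Proof. by rewrite ltr_wpDr ?mulr_ge0 ?ler0n // ltr_wpDl ?mulr_ge0 // !mulr_gt0 ?ltr0n. Qed.

Let Rr : R \is Num.real := gtr0_real R_gt0.

Let Im_D_real : 2%:R * beta * b1 \is Num.real.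
Proof. by rewrite !rpredM ?rpred_nat. Qed.

Lemma D_neq0 : D != 0.
Proof.
have ReD : 'Re D = R by rewrite DE Re_rect.
by apply: contraTneq R_gt0 => D0; rewrite -ReD D0 raddf0 ltxx.
Qed.

Lemma pencil_root_sqr lam :
  beta * lam ^+ 2 * (alpha + 2%:R * q) - beta * lam * q + (2%:R * lam - 1) ^+ 2 * c1 = 0 ->
  (D * (2%:R * lam - 1) + alpha * beta + beta * q) ^+ 2 = a2 + 'i * b2.
Proof.
move=> quad0; transitivity (beta ^+ 2 * q ^+ 2 - 4%:R * alpha * beta * c1
  + 4%:R * D * (beta * lam ^+ 2 * (alpha + 2%:R * q) - beta * lam * q
                + (2%:R * lam - 1) ^+ 2 * c1)); first by ring.
by rewrite quad0 mulr0 addr0 sqrrD exprMn sqrCi; ring.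
Qed.

Lemma half_dist_le x y : x \is Num.real -> y \is Num.real ->
  `|x| <= alpha * beta + 2%:R * beta * a1 -> `|y| <= beta * `|b1| + sq ->
  `|(x + 'i * y) / (2%:R * D)| ^+ 2 <= X.
Proof.
move=> xr yr hx hy; rewrite DE.
apply: le_trans (norm_rect_div_le _ hx hy) _; last by rewrite !exprMn -natrX.
by split.
Qed.

Lemma pencil_root_cases lam :
  beta * lam ^+ 2 * (alpha + 2%:R * q) - beta * lam * q + (2%:R * lam - 1) ^+ 2 * c1 = 0 ->
  lam = 2%:R^-1 + ((z1 - alpha * beta - beta * a1) + 'i * (z2 - beta * b1)) / (2%:R * D)
  \/ lam = 2%:R^-1 - ((z1 + alpha * beta + beta * a1) + 'i * (z2 + beta * b1)) / (2%:R * D).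
Proof.
have D_neq0 := D_neq0.
move=> /pencil_root_sqr; rewrite -root_sqr => /eqP; rewrite eqf_sqr.
case/orP=> /eqP rootE; [left | right].
- have tE : D * (2%:R * lam - 1) = z1 + 'i * z2 - (alpha * beta + beta * q).
    by rewrite -rootE; ring.
  by rewrite (_ : _ + 'i * _ = D * (2%:R * lam - 1)); [field | rewrite tE; ring].
- have tE : D * (2%:R * lam - 1) = - (z1 + 'i * z2) - (alpha * beta + beta * q).
    by rewrite -rootE; ring.
  by rewrite (_ : _ + 'i * _ = - (D * (2%:R * lam - 1))); [field | rewrite tE; ring].
Qed.

Let z1_ge0 : 0 <= z1.
Proof. by rewrite sqrtC_ge0 divr_ge0 ?ler0n ?sqrtC_sqrD_addr_ge0. Qed.

Let z1r : z1 \is Num.real := ger0_real z1_ge0.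

Let z2r : z2 \is Num.real.
Proof.
have sgn_real : sgn \is Num.real by case: hsgn => ->; rewrite ?rpredN rpred1.
by rewrite rpredM // ger0_real // sqrtC_ge0 divr_ge0 ?ler0n ?sqrtC_sqrD_subr_ge0.
Qed.

Let re_shift_ge0 : 0 <= alpha * beta + beta * a1.
Proof. by rewrite addr_ge0 ?mulr_ge0. Qed.

Let re_bound_split : beta * a1 + (alpha * beta + beta * a1) = alpha * beta + 2%:R * beta * a1.
Proof. by ring. Qed.

Lemma root_plus_half_dist_le :
  `|2%:R^-1 + ((z1 - alpha * beta - beta * a1) + 'i * (z2 - beta * b1)) / (2%:R * D)
     - 2%:R^-1| ^+ 2 <= X.
Proof.
rewrite [2%:R^-1 + _]addrC addrK; apply: half_dist_le.
- by rewrite !rpredB ?rpredM.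
- by rewrite rpredB // rpredM.
- rewrite -addrA -opprD -re_bound_split (le_trans (ler_normB _ _)) //.
  by rewrite !ger0_norm // lerD2r root_re_le.
- rewrite (le_trans (ler_normB _ _)) // [`|beta * _|]normrM (gtr0_norm hb) addrC lerD2l.
  exact: norm_root_im_le.
Qed.

Lemma root_minus_half_dist_le :
  `|2%:R^-1 - ((z1 + alpha * beta + beta * a1) + 'i * (z2 + beta * b1)) / (2%:R * D)
     - 2%:R^-1| ^+ 2 <= X.
Proof.
rewrite addrAC subrr add0r normrN; apply: half_dist_le.
- by rewrite !rpredD ?rpredM.
- by rewrite rpredD // rpredM.
- by rewrite -addrA (ger0_norm (addr_ge0 z1_ge0 re_shift_ge0)) -re_bound_split lerD2r root_re_le.
- rewrite (le_trans (ler_normD _ _)) // [`|beta * _|]normrM (gtr0_norm hb) addrC lerD2l.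
  exact: norm_root_im_le.
Qed.

End EigenvalueFormula.

Section BoundMonotonicity.
Context {C : numClosedFieldType}.
Variables (alpha beta : C).
Hypotheses (ha : 0 <= alpha) (hb : 0 < beta).

Let beta_ge0 : 0 <= beta := ltW hb.

Local Notation bound_num a b c := ((alpha * beta + 2%:R * beta * a) ^+ 2
  + (beta * b + sqrtC (beta ^+ 2 * b ^+ 2 + 4%:R * alpha * beta * c)) ^+ 2).

Lemma bound_num_le (a b c a' b' c' : C) :
  0 <= a <= a' -> 0 <= b <= b' -> 0 <= c <= c' -> bound_num a b c <= bound_num a' b' c'.
Proof.
move=> /andP [a_ge0 le_a] /andP [b_ge0 le_b] /andP [c_ge0 le_c].
have mono_sqr (x y : C) : 0 <= x -> x <= y -> x ^+ 2 <= y ^+ 2.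
  by move=> x_ge0 le_xy; rewrite lerXn2r // nnegrE (le_trans x_ge0).
have rad_ge0 : 0 <= beta ^+ 2 * b ^+ 2 + 4%:R * alpha * beta * c.
  by rewrite addr_ge0 ?mulr_ge0 ?exprn_ge0 ?ler0n.
apply: lerD; apply: (mono_sqr).
- by rewrite addr_ge0 ?mulr_ge0 ?ler0n.
- by rewrite lerD2l ler_wpM2l ?mulr_ge0 ?ler0n.
- by rewrite addr_ge0 ?mulr_ge0 ?sqrtC_ge0.
have le_rad : beta ^+ 2 * b ^+ 2 + 4%:R * alpha * beta * c
    <= beta ^+ 2 * b' ^+ 2 + 4%:R * alpha * beta * c'.
  apply: lerD; apply: ler_wpM2l => //; first exact: exprn_ge0.
    exact: mono_sqr.
  by rewrite !mulr_ge0 ?ler0n.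
by rewrite lerD ?ler_wpM2l // ler_sqrtC // nnegrE (le_trans rad_ge0).
Qed.

Lemma bound_le_spectral_bound (a1 b1 c1 rH rS rBB lH lBB : C) :
  b1 \is Num.real -> 0 < lH -> lH <= a1 <= rH -> `|b1| <= rS -> 0 <= lBB -> lBB <= c1 <= rBB ->
  ((alpha * beta + 2%:R * beta * a1) ^+ 2
     + (beta * `|b1| + sqrtC (beta ^+ 2 * b1 ^+ 2 + 4%:R * alpha * beta * c1)) ^+ 2)
    / (4%:R * ((alpha * beta + 2%:R * beta * a1 + 4%:R * c1) ^+ 2 + 4%:R * beta ^+ 2 * b1 ^+ 2))
  <= ((alpha * beta + 2%:R * beta * rH) ^+ 2
     + (beta * rS + sqrtC (beta ^+ 2 * rS ^+ 2 + 4%:R * alpha * beta * rBB)) ^+ 2)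
    / (4%:R * (alpha * beta + 2%:R * beta * lH + 4%:R * lBB) ^+ 2).
Proof.
move=> b1r lH_gt0 /andP [le_lH le_rH] le_rS lBB_ge0 /andP [le_lBB le_rBB].
have a1_ge0 : 0 <= a1 := le_trans (ltW lH_gt0) le_lH.
have c1_ge0 : 0 <= c1 := le_trans lBB_ge0 le_lBB.
have den_gt0 : 0 < alpha * beta + 2%:R * beta * lH + 4%:R * lBB.
  by rewrite ltr_wpDr ?mulr_ge0 ?ler0n // ltr_wpDl ?mulr_ge0 // !mulr_gt0 ?ltr0n.
have le_den : alpha * beta + 2%:R * beta * lH + 4%:R * lBB
    <= alpha * beta + 2%:R * beta * a1 + 4%:R * c1.
  apply: lerD; [apply: lerD => //; apply: ler_wpM2l | apply: ler_wpM2l];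
    rewrite ?mulr_ge0 ?ler0n //.
have den1_gt0 := lt_le_trans den_gt0 le_den.
rewrite -[b1 ^+ 2]real_normK //; apply: ler_pM.
- rewrite addr_ge0 // exprn_ge0 // addr_ge0 ?mulr_ge0 ?ler0n // sqrtC_ge0.
  by rewrite addr_ge0 ?mulr_ge0 ?exprn_ge0 ?ler0n.
- rewrite invr_ge0 mulr_ge0 ?ler0n // addr_ge0 ?exprn_ge0 ?(ltW den1_gt0) //.
  by rewrite !mulr_ge0 ?ler0n ?exprn_ge0.
- by apply: bound_num_le; rewrite ?a1_ge0 ?normr_ge0 ?c1_ge0.
have pos0 : 0 < 4%:R * (alpha * beta + 2%:R * beta * lH + 4%:R * lBB) ^+ 2.
  by rewrite mulr_gt0 ?ltr0n ?exprn_gt0.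
have le_den2 : 4%:R * (alpha * beta + 2%:R * beta * lH + 4%:R * lBB) ^+ 2
    <= 4%:R * ((alpha * beta + 2%:R * beta * a1 + 4%:R * c1) ^+ 2
               + 4%:R * beta ^+ 2 * `|b1| ^+ 2).
  rewrite ler_pM2l ?ltr0n // (le_trans (lerXn2r _ _ _ le_den)) ?nnegrE;
    rewrite ?(ltW den_gt0) ?(ltW den1_gt0) //.
  by rewrite lerDl !mulr_ge0 ?ler0n ?exprn_ge0.
by rewrite lef_pV2 ?posrE // (lt_le_trans pos0).
Qed.

End BoundMonotonicity.

Theorem theorem5p1 (C : numClosedFieldType) (m n : nat)
  (A : 'M[C]_m) (B : 'M[C]_(m, n)) (alpha beta : C)
  (hA : posdef A) (hB : B \is a mxOver Num.real) (hnm : (n <= m)%N)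
  (halpha : 0 <= alpha) (hbeta : 0 < beta)
  (lam : C) (u : 'cV[C]_m) (v : 'cV[C]_n)
  (hw : col_mx u v != 0)
  (heig : invmx (P_MGSSP A B alpha beta) *m saddleA A B *m col_mx u v = lam *: col_mx u v)
  (hBu : B^T *m u != 0)
  (rH rS rBB lH lBB : C)
  (hrH : is_spectral_radius (2%:R^-1 *: (A + A^T)) rH)
  (hrS : is_spectral_radius (2%:R^-1 *: (A - A^T)) rS)
  (hrBB : is_spectral_radius (B *m B^T) rBB)
  (hlH : is_lambda_min (2%:R^-1 *: (A + A^T)) lH)
  (hlBB : is_lambda_min (B *m B^T) lBB)
  (sgn : C) :
  let uu := (ctrmx u *m u) 0 0 in
  let q := (ctrmx u *m A *m u) 0 0 / uu in
  let a1 := 'Re q in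
  let b1 := 'Im q in
  let c1 := (ctrmx u *m B *m B^T *m u) 0 0 / uu in
  let a2 := beta ^+ 2 * (a1 ^+ 2 - b1 ^+ 2) - 4%:R * alpha * beta * c1 in
  let b2 := 2%:R * beta ^+ 2 * a1 * b1 in
  (sgn = 1 \/ sgn = -1) -> (b1 != 0 -> sgn = Num.sg b1) ->
  let z1 := sqrtC ((sqrtC (a2 ^+ 2 + b2 ^+ 2) + a2) / 2%:R) in
  let z2 := sgn * sqrtC ((sqrtC (a2 ^+ 2 + b2 ^+ 2) - a2) / 2%:R) in
  let D := alpha * beta + 2%:R * beta * a1 + 4%:R * c1 + 2%:R * 'i * beta * b1 in
  let lamp := 2%:R^-1 + ((z1 - alpha * beta - beta * a1) + 'i * (z2 - beta * b1)) / (2%:R * D) in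
  let lamm := 2%:R^-1 - ((z1 + alpha * beta + beta * a1) + 'i * (z2 + beta * b1)) / (2%:R * D) in
  let X := ((alpha * beta + 2%:R * beta * a1) ^+ 2
            + (beta * `|b1| + sqrtC (beta ^+ 2 * b1 ^+ 2 + 4%:R * alpha * beta * c1)) ^+ 2)
           / (4%:R * ((alpha * beta + 2%:R * beta * a1 + 4%:R * c1) ^+ 2
                      + 4%:R * beta ^+ 2 * b1 ^+ 2)) in
  let Y := ((alpha * beta + 2%:R * beta * rH) ^+ 2
            + (beta * rS + sqrtC (beta ^+ 2 * rS ^+ 2 + 4%:R * alpha * beta * rBB)) ^+ 2)
           / (4%:R * (alpha * beta + 2%:R * beta * lH + 4%:R * lBB) ^+ 2) in
  (lam = lamp \/ lam = lamm) /\
  `|lamp - 2%:R^-1| ^+ 2 <= X /\ `|lamm - 2%:R^-1| ^+ 2 <= X /\ X <= Y.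
Proof.
move=> uu q a1 b1 c1 a2 b2 hsgn hsgnb z1 z2 D lamp lamm X Y.
have u_neq0 : u != 0 by apply: contraNneq hBu => ->; rewrite mulmx0.
have /andP [le_lH le_rH] := rayleigh_Re_bounds hA u_neq0 hlH hrH.
have le_rS := rayleigh_Im_bound hA u_neq0 hrS.
have /andP [le_lBB le_rBB] := rayleigh_gram_bounds hB u_neq0 hlBB hrBB.
have lH_gt0 := eigenvalue_sym_part_gt0 hA hlH.1.
have lBB_ge0 := eigenvalue_gram_ge0 hB hlBB.1.
have a1_gt0 : 0 < a1 := lt_le_trans lH_gt0 le_lH.
have c1_ge0 : 0 <= c1 := le_trans lBB_ge0 le_lBB.
have b1_real : b1 \is Num.real := Creal_Im _.
have quad := eigen_quadratic hA hB halpha hbeta u_neq0 heig.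
rewrite -/uu -/q -/c1 [q]Crect -/a1 -/b1 in quad.
split; first exact: pencil_root_cases quad.
split; first exact: root_plus_half_dist_le.
split; first exact: root_minus_half_dist_le.
by apply: bound_le_spectral_bound; rewrite ?le_lH ?le_rH ?le_lBB ?le_rBB.
Qed.
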